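(* Let $\lambda\in\mathbb{R}$, let $r,k\ge1$ be integers and let $z\in\mathbb{C}$. Then \[ \phi_{k,\lambda}^{(r,r)}(|z|^2)=e^{-|z|^2}\sum_{n=1}^{\infty}\frac{(|z|^2)^n}{n!}\big((n)_r\big)_{k,\lambda}. \] In particular, when $|z|=1$, \[ \phi_{k,\lambda}^{(r,r)}=\frac{1}{e}\sum_{n=1}^{\infty}\frac{1}{n!}\big((n)_r\big)_{k,\lambda}. \]
   Context: Notation: $(x)_0=1$, $(x)_m=x(x-1)\cdots(x-m+1)$; $(y)_{0,\lambda}=1$, $(y)_{k,\lambda}=y(y-\lambda)\cdots(y-(k-1)\lambda)$. Let $D=\frac{d}{dx}$ and let $x$ also denote multiplication by $x$. The numbers $S_\lambda^{(r,r)}(k,j)$, $0\le j\le kr$, are defined by the operator identity $\prod_{i=0}^{k-1}\big(x^{r}D^{r}-i\lambda\big)=\sum_{j=0}^{kr}S_\lambda^{(r,r)}(k,j)\,x^{j}D^{j}$ (equivalently, the boson normal ordering $\prod_{i=0}^{k-1}\big((a^{\dagger})^{r}a^{r}-i\lambda\big)=\sum_{j=0}^{kr}S_\lambda^{(r,r)}(k,j)(a^{\dagger})^{j}a^{j}$ with $[a,a^{\dagger}]=1$), and $\phi_{k,\lambda}^{(r,r)}(x)=\sum_{j=0}^{kr}S_\lambda^{(r,r)}(k,j)x^j$, $\phi_{k,\lambda}^{(r,r)}=\phi_{k,\lambda}^{(r,r)}(1)$. *)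

From Stdlib Require Import Reals.
From Coquelicot Require Import Coquelicot.
From HB Require Import structures.
From mathcomp Require Import all_boot all_order all_algebra.
From mathcomp Require Import Rstruct.
Set Implicit Arguments. Unset Strict Implicit. Unset Printing Implicit Defensive.
Import GRing.Theory.

Local Open Scope ring_scope.

Definition ffact (x : R) (m : nat) : R := \prod_(i < m) (x - i%:R).

Definition gfact (y : R) (k : nat) (lam : R) : R :=
  \prod_(i < k) (y - i%:R * lam).

Definition xD (j : nat) (p : {poly R}) : {poly R} := 'X^j * p^`(j).

(* the operator prod_{i=0}^{k-1} (x^r D^r - i lam) acting on polynomials
   (the factors are polynomials in x^r D^r, hence commute) *)
Fixpoint opprod (lam : R) (r k : nat) (p : {poly R}) : {poly R} :=
  match k with
  | 0 => p
  | k'.+1 => let q := opprod lam r k' p in xD r q - (k'%:R * lam) *: q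
  end.

(* S : nat -> R are the numbers S_lam^{(r,r)}(k,j), 0 <= j <= k r, i.e.
   they satisfy the operator identity
   prod_{i=0}^{k-1} (x^r D^r - i lam) = sum_{j=0}^{kr} S j x^j D^j
   (as operators on polynomials). *)
Definition is_Srr (lam : R) (r k : nat) (S : nat -> R) : Prop :=
  forall p : {poly R},
    opprod lam r k p = \sum_(j < (k * r).+1) S j *: xD j p.

Definition phi (r k : nat) (S : nat -> R) (x : R) : R :=
  \sum_(j < (k * r).+1) S j * x ^+ j.

Definition term (lam : R) (r k : nat) (t : R) (n : nat) : R :=
  t ^+ n / (n`!)%:R * gfact (ffact n%:R r) k lam.

From Stdlib Require Import Reals.
From Coquelicot Require Import Coquelicot.
From HB Require structures.
From mathcomp Require all_boot all_order all_algebra Rstruct ring.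

(* The monomials x^n diagonalise every operator x^j D^j, with eigenvalue
   (n)_j; hence applying the defining identity of S to x^n gives
   ((n)_r)_{k,lam} = sum_j S j (n)_j.  Multiplying by t^n/n! and summing over
   n, each falling factorial contributes sum_n t^n/n! (n)_j = t^j e^t, so the
   whole series is phi(t) e^t.  The n = 0 term vanishes because r, k >= 1. *)

(* The MathComp notations are imported only inside this module: at top level
   they would change how the statement of [theorem10] is parsed.
   [phi_exp_series] is stated with [Nat.add] and [Rmult], the constants that
   statement elaborates to: matching [addn] against [Nat.add] under [term]
   makes conversion checking blow up. *)
Module PhiSeries.
Import structures all_boot all_order all_algebra Rstruct ring.
Import GRing.Theory Num.Theory.
Local Open Scope ring_scope.

Notation is_Rseries := (@is_series R_AbsRing R_NormedModule).

Lemma ffact_natr (n j : nat) : ffact n%:R j = (n ^_ j)%:R.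
Proof.
elim: j => [|j IHj]; first by rewrite /ffact big_ord0.
rewrite /ffact big_ord_recr /= -/(ffact _ j) IHj ffactnSr natrM.
have [le_jn | lt_nj] := leqP j n; first by rewrite natrB.
by rewrite ffact_small // !mul0r.
Qed.

Lemma xD_Xn (j n : nat) : xD j 'X^n = ffact n%:R j *: 'X^n.
Proof.
rewrite /xD derivnXn ffact_natr.
have [le_jn | lt_nj] := leqP j n.
  by rewrite mulrnAr -exprD subnKC // scaler_nat.
by rewrite ffact_small // mulr0n mulr0 scale0r.
Qed.

Lemma opprod_Xn lam r k n :
  opprod lam r k 'X^n = gfact (ffact n%:R r) k lam *: 'X^n.
Proof.
elim: k => [|k IHk] /=; first by rewrite /gfact big_ord0 scale1r.
rewrite IHk /xD derivnZ -scalerAr -/(xD r _) xD_Xn !scalerA -scalerBl.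
by rewrite /gfact big_ord_recr /= mulrBr [_ * (_ * lam)]mulrC.
Qed.

Lemma is_Srr_gfact_ffact lam r k S n : is_Srr lam r k S ->
  gfact (ffact n%:R r) k lam = \sum_(j < (k * r).+1) S j * ffact n%:R j.
Proof.
move=> HS; have := congr1 (fun p : {poly R} => p`_n) (HS 'X^n).
rewrite opprod_Xn coefZ coefXn eqxx mulr1 => ->.
rewrite coef_sum; apply: eq_bigr => j _.
by rewrite xD_Xn !coefZ coefXn eqxx mulr1.
Qed.

Lemma gfact_ffact0 lam r k : (0 < r)%N -> (0 < k)%N ->
  gfact (ffact 0 r) k lam = 0.
Proof.
case: r k => [|r] [|k] // _ _.
by rewrite /gfact /ffact !big_ord_recl /= !mul0r !subr0 !mul0r.
Qed.

Lemma is_Rseries_zero : is_Rseries (fun=> 0) 0.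
Proof.
apply: (filterlim_ext (fun=> zero)); last exact: filterlim_const.
by move=> n; rewrite -[RHS]/(sum_n_m (fun=> zero) 0 n) sum_n_m_const_zero.
Qed.

Lemma is_Rseries_sum N (F : nat -> nat -> R) (L : nat -> R) :
  (forall j, is_Rseries (F j) (L j)) ->
  is_Rseries (fun n => \sum_(j < N) F j n) (\sum_(j < N) L j).
Proof.
move=> HF; elim: N => [|N IHN].
  rewrite big_ord0; apply: (is_series_ext _ _ _ _ is_Rseries_zero) => n.
  by rewrite big_ord0.
rewrite big_ord_recr.
apply: (is_series_ext _ _ _ _ (is_series_plus _ _ _ _ IHN (HF N))) => n.
by rewrite big_ord_recr.
Qed.

Lemma is_Rseries_drop_zeros (a : nat -> R) j l :
  (forall n, (n < j)%N -> a n = 0) ->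
  is_Rseries (fun m => a (j + m)%N) l -> is_Rseries a l.
Proof.
case: j => [|j] a0 Ha; first by apply: (is_series_ext _ _ _ _ Ha).
apply: (is_series_decr_n a j.+1); first exact/ltP.
have -> : sum_n a j = zero.
  rewrite -[RHS](sum_n_m_const_zero 0 j).
  by apply: sum_n_m_ext_loc => n [_ /leP le_nj]; rewrite a0.
by rewrite opp_zero plus_zero_r.
Qed.

Lemma is_Rseries_exp (t : R) : is_Rseries (fun n => t ^+ n / (n`!)%:R) (exp t).
Proof.
apply: (is_series_ext _ _ _ _ (is_exp_Reals t)) => n.
by rewrite pow_n_pow /scal /= /mult /= -!RealsE.
Qed.

Lemma is_Rseries_exp_ffact (t : R) j :
  is_Rseries (fun n => t ^+ n / (n`!)%:R * ffact n%:R j) (t ^+ j * exp t).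
Proof.
apply: (is_Rseries_drop_zeros _ j).
  by move=> n lt_nj; rewrite ffact_natr ffact_small // mulr0.
have := is_series_scal (t ^+ j) _ _ (is_Rseries_exp t).
apply: is_series_ext => m; rewrite /scal /= /mult /= !RealsE ffact_natr exprD.
rewrite -(ffact_fact (leq_addr m j)) addKn.
have ffact_neq0 : ((j + m) ^_ j)%:R != 0 :> R.
  by rewrite pnatr_eq0 -lt0n ffact_gt0 leq_addr.
have fact_neq0 : (m`!)%:R != 0 :> R by rewrite pnatr_eq0 -lt0n fact_gt0.
by rewrite natrM; field; rewrite ffact_neq0 fact_neq0.
Qed.

Lemma is_Rseries_gfact lam r k S (t : R) : is_Srr lam r k S ->
  is_Rseries (fun n => t ^+ n / (n`!)%:R * gfact (ffact n%:R r) k lam)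
             (phi r k S t * exp t).
Proof.
move=> HS; rewrite /phi mulr_suml.
under eq_bigr do rewrite -mulrA.
apply: (is_series_ext _ _ _ _ (is_Rseries_sum _ _ _ (fun j =>
          is_series_scal (S j) _ _ (is_Rseries_exp_ffact t j)))) => n.
rewrite (is_Srr_gfact_ffact _ _ _ _ n HS) mulr_sumr.
by apply: eq_bigr => j _; rewrite mulrCA.
Qed.

Lemma is_Rseries_term lam r k S (t : R) : (0 < r)%N -> (0 < k)%N ->
  is_Srr lam r k S ->
  is_Rseries (fun m => term lam r k t (Nat.add m 1)) (phi r k S t * exp t).
Proof.
move=> r_gt0 k_gt0 HS.
apply: (is_series_ext _ _ _ _ (is_series_incr_1 _ _ _)) => [m|].
  by rewrite plusE addn1.
rewrite /term mulr0n gfact_ffact0 // Rmult_0_r plus_zero_r.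
exact: is_Rseries_gfact.
Qed.

Lemma phi_exp_series lam r k S (t : R) : (0 < r)%N -> (0 < k)%N ->
  is_Srr lam r k S ->
  ex_series (fun m => term lam r k t (Nat.add m 1)) /\
  phi r k S t =
    Rmult (exp (- t)) (Series (fun m => term lam r k t (Nat.add m 1))).
Proof.
move=> r_gt0 k_gt0 HS.
have Hser := is_Rseries_term lam r k S t r_gt0 k_gt0 HS.
split; first by exists (phi r k S t * exp t).
have exp_cancel : exp (- t) * exp t = 1.
  by rewrite -RmultE -exp_plus Rplus_opp_l exp_0 R1E.
by rewrite (is_series_unique _ _ Hser) RmultE mulrCA exp_cancel mulr1.
Qed.

End PhiSeries.

(* Srr j = S_lam^{(r,r)}(k,j).  Series are indexed from n = 1:
   the Coquelicot series at index m is the term with n = m + 1. *)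
Theorem theorem10 (lam : R) (r k : nat) (z : C) (Srr : nat -> R) :
  (1 <= r)%nat -> (1 <= k)%nat -> is_Srr lam r k Srr ->
  (ex_series (fun m => term lam r k (Cmod z ^ 2) (m + 1)) /\
   phi r k Srr (Cmod z ^ 2) =
     (exp (- (Cmod z ^ 2)) * Series (fun m => term lam r k (Cmod z ^ 2) (m + 1)))%R)
  /\
  (ex_series (fun m => term lam r k 1 (m + 1)) /\
   phi r k Srr 1 = (/ exp 1 * Series (fun m => term lam r k 1 (m + 1)))%R).
Proof.
intros hr hk HS.
pose proof (ssrbool.introT ssrnat.leP hr) as r_gt0.
pose proof (ssrbool.introT ssrnat.leP hk) as k_gt0.
split; [exact (PhiSeries.phi_exp_series lam r k Srr _ r_gt0 k_gt0 HS) |].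
destruct (PhiSeries.phi_exp_series lam r k Srr 1 r_gt0 k_gt0 HS)
  as [ex_at1 phi_at1].
split; [exact ex_at1 |].
rewrite phi_at1, exp_Ropp; reflexivity.
Qed.
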